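(* Let $\mathcal{X}$ and $\mathcal{Y}$ be mm-spaces with $X$ and $Y$ finite sets, and let $p\geq1$. If $|X|=|Y|$ then $d_{\mathrm{GM},p}(\mathcal{X},\mathcal{Y})=d_{\mathrm{GM},p}(\mathcal{Y},\mathcal{X})$. If $|X|\neq|Y|$, then at least one of $d_{\mathrm{GM},p}(\mathcal{X},\mathcal{Y})$, $d_{\mathrm{GM},p}(\mathcal{Y},\mathcal{X})$ equals $\infty$, so that $d_{\mathrm{GM},p}(\mathcal{X},\mathcal{Y})=d_{\mathrm{GM},p}(\mathcal{Y},\mathcal{X})$ holds only when both equal $\infty$.
   Context: A metric measure space (mm-space) is a triple $\mathcal{X}=(X,d_X,\mu_X)$ where $(X,d_X)$ is a compact metric space and $\mu_X$ is a Borel probability measure on $X$ with full support. For mm-spaces $\mathcal{X},\mathcal{Y}$, let $\mathcal{T}(\mu_X,\mu_Y)$ be the set of measurable maps $\phi:X\to Y$ with $\phi_\#\mu_X=\mu_Y$. For $p\in[1,\infty)$, $$d_{\mathrm{GM},p}(\mathcal{X},\mathcal{Y})=\inf_{\phi\in\mathcal{T}(\mu_X,\mu_Y)}\left(\iint_{X\times X}\big|d_X(x,x')-d_Y(\phi(x),\phi(x'))\big|^p\,\mu_X(dx)\,\mu_X(dx')\right)^{1/p},$$ with $d_{\mathrm{GM},p}(\mathcal{X},\mathcal{Y})=\infty$ if $\mathcal{T}(\mu_X,\mu_Y)=\emptyset$. *)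

From Stdlib Require Import Reals.
From mathcomp Require Import all_boot.
Set Implicit Arguments.
Unset Strict Implicit.
Unset Printing Implicit Defensive.

Local Open Scope R_scope.

Definition rsum (T : finType) (f : T -> R) : R := \big[Rplus/0]_(x : T) f x.

(* Real power x^a for x >= 0 (with 0^a = 0 for a > 0). *)
Definition rpow (x a : R) : R := if Rlt_dec 0 x then Rpower x a else 0.

(* On a finite metric
   space the topology is discrete: compactness is automatic, every map is
   Borel measurable, and a probability measure is given by its point masses. *)
Record finMMSpace := FinMMSpace {
  mm_pt : finType;
  mm_d : mm_pt -> mm_pt -> R;
  mm_mu : mm_pt -> R;
  mm_d_nonneg : forall x y, 0 <= mm_d x y;
  mm_d_eq0 : forall x y, mm_d x y = 0 <-> x = y;
  mm_d_sym : forall x y, mm_d x y = mm_d y x;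
  mm_d_tri : forall x y z, mm_d x z <= mm_d x y + mm_d y z;
  mm_mu_pos : forall x, 0 < mm_mu x;   (* full support *)
  mm_mu_sum : rsum mm_mu = 1
}.

(* phi_# mu_X = mu_Y, checked on singletons (equivalent on a finite set). *)
Definition is_transport (X Y : finMMSpace) (phi : mm_pt X -> mm_pt Y) : Prop :=
  forall y : mm_pt Y,
    rsum (fun x : mm_pt X => if phi x == y then mm_mu x else 0) = mm_mu y.

Definition is_transportb (X Y : finMMSpace) (phi : mm_pt X -> mm_pt Y) : bool :=
  [forall y : mm_pt Y,
     if Req_EM_T (rsum (fun x : mm_pt X => if phi x == y then mm_mu x else 0))
                 (mm_mu y) then true else false].

Definition gm_cost (p : R) (X Y : finMMSpace) (phi : mm_pt X -> mm_pt Y) : R :=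
  rpow (rsum (fun x : mm_pt X => rsum (fun x' : mm_pt X =>
          rpow (Rabs (mm_d x x' - mm_d (phi x) (phi x'))) p
          * mm_mu x * mm_mu x')))
       (/ p).

(* d_{GM,p}(X,Y) as an extended real: None stands for +infinity.
   Since X, Y are finite, the set of maps is finite, so the infimum is the
   minimum over the finite list of transport maps. *)
Definition dGM (p : R) (X Y : finMMSpace) : option R :=
  match [seq @gm_cost p X Y (fun x => f x)
        | f : {ffun mm_pt X -> mm_pt Y} <- enum {ffun mm_pt X -> mm_pt Y}
        & @is_transportb X Y (fun x => f x)] with
  | [::] => None
  | c :: cs => Some (foldl Rmin c cs)
  end.

(* A transport map between finite spaces with full-support measures is
   surjective, since every point of the target carries positive mass and so
   has a nonempty preimage.  Hence a transport X -> Y forces |Y| <= |X|, and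
   if transports exist in both directions then |X| = |Y|: this gives the
   second part.  When |X| = |Y| every transport f is a bijection, so it
   preserves the point masses, its inverse is a transport Y -> X, and the
   distortion cost is symmetric in (x, f x); the two minimisations then range
   over the same set of costs. *)

From Stdlib Require Import Reals Lra.
From mathcomp Require Import all_boot Rstruct.

Set Implicit Arguments.
Unset Strict Implicit.
Unset Printing Implicit Defensive.

Local Open Scope R_scope.

Lemma is_transportP (X Y : finMMSpace) (f : mm_pt X -> mm_pt Y) :
  reflect (is_transport f) (is_transportb f).
Proof.
rewrite /is_transportb; apply: (iffP forallP) => H y.
- by move: (H y); case: Req_dec_T.
- by case: Req_dec_T => // /(_ (H y)).
Qed.

Lemma rsum_eq0 (T : finType) (f : T -> R) : (forall x, f x = 0) -> rsum f = 0.
Proof. by move=> f0; rewrite /rsum big1. Qed.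

Lemma rsum_delta (T : finType) (a : T) (P : pred T) (F : T -> R) :
  (forall x, P x = (x == a)) -> rsum (fun x => if P x then F x else 0) = F a.
Proof.
move=> Pa; rewrite /rsum (bigD1 a) //= Pa eqxx big1 ?Rplus_0_r // => x.
by rewrite Pa => /negbTE ->.
Qed.

Section Transport.
Variables (X Y : finMMSpace) (f : mm_pt X -> mm_pt Y).
Hypothesis f_transport : is_transport f.

Lemma transport_surj y : exists x, f x == y.
Proof.
case: (pickP (fun x => f x == y)) => [x fx|no_preim]; first by exists x.
have := f_transport y; rewrite rsum_eq0 => [mu0|x]; last by rewrite no_preim.
have := mm_mu_pos y; lra.
Qed.

Definition transport_section (y : mm_pt Y) : mm_pt X :=
  xchoose (transport_surj y).

Lemma transport_sectionK : cancel transport_section f.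
Proof. by move=> y; apply/eqP; apply: (xchooseP (transport_surj y)). Qed.

Lemma card_transport_le : (#|mm_pt Y| <= #|mm_pt X|)%N.
Proof. exact: (@leq_card _ _ transport_section (can_inj transport_sectionK)). Qed.

Hypothesis card_eq : #|mm_pt X| = #|mm_pt Y|.

Lemma transportK : cancel f transport_section.
Proof.
move=> x; have /codomP[y ->] : x \in codom transport_section.
  by apply: inj_card_onto; [exact: can_inj transport_sectionK | rewrite card_eq].
by rewrite transport_sectionK.
Qed.

Lemma transport_mu x : mm_mu (f x) = mm_mu x.
Proof.
by rewrite -f_transport (rsum_delta (a := x)) // => x'; rewrite (can_eq transportK).
Qed.

End Transport.

Section Inverse.
Variables (X Y : finMMSpace) (f : mm_pt X -> mm_pt Y) (g : mm_pt Y -> mm_pt X).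
Hypotheses (fK : cancel f g) (gK : cancel g f).
Hypothesis f_mu : forall x, mm_mu (f x) = mm_mu x.

Let f_bij : {on [pred _ | true], bijective f}.
Proof. by apply: onW_bij; exists g. Qed.

Lemma is_transport_inv : is_transport g.
Proof.
move=> x; rewrite /rsum (reindex f f_bij) -/(rsum _).
by rewrite (rsum_delta (a := x)) ?f_mu // => x'; rewrite fK.
Qed.

Lemma gm_cost_inv p : gm_cost p g = gm_cost p f.
Proof.
rewrite /gm_cost /rsum (reindex f f_bij); congr rpow; apply: eq_bigr => x _.
rewrite (reindex f f_bij); apply: eq_bigr => x' _.
by rewrite !fK !f_mu Rabs_minus_sym.
Qed.

End Inverse.

Definition gm_costs (p : R) (X Y : finMMSpace) : seq R :=
  [seq @gm_cost p X Y (fun x => f x)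
  | f : {ffun mm_pt X -> mm_pt Y} <- enum {ffun mm_pt X -> mm_pt Y}
  & @is_transportb X Y (fun x => f x)].

Definition seq_min (s : seq R) : option R :=
  if s is c :: cs then Some (foldl Rmin c cs) else None.

Lemma dGME p X Y : dGM p X Y = seq_min (gm_costs p X Y).
Proof. by []. Qed.

Lemma gm_costsP p (X Y : finMMSpace) a :
  reflect (exists2 f : mm_pt X -> mm_pt Y, is_transport f & a = gm_cost p f)
          (a \in gm_costs p X Y).
Proof.
rewrite /gm_costs; apply: (iffP mapP) => [[f] | [f f_tr ->]].
  by rewrite mem_filter => /andP[/is_transportP f_tr _] ->; exists f.
exists [ffun x => f x].
  rewrite mem_filter mem_enum andbT; apply/is_transportP => y.
  by rewrite -(f_tr y) /rsum; apply: eq_bigr => x _; rewrite ffunE.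
rewrite /gm_cost /rsum; congr rpow; apply: eq_bigr => x _.
by apply: eq_bigr => x' _; rewrite !ffunE.
Qed.

Lemma foldl_Rmin_mem c cs : foldl Rmin c cs \in c :: cs.
Proof.
elim: cs c => [|d cs IH] c /=; first by rewrite mem_seq1.
have := IH (Rmin c d); rewrite !inE /Rmin; case: Rle_dec => _ /orP[->|->];
  by rewrite ?eqxx ?orbT.
Qed.

Lemma foldl_Rmin_le c cs z : z \in c :: cs -> foldl Rmin c cs <= z.
Proof.
elim: cs c z => [|d cs IH] c z; first by rewrite mem_seq1 => /eqP ->; apply: Rle_refl.
have le_head := IH (Rmin c d) _ (mem_head _ _).
rewrite !inE => /or3P[/eqP-> | /eqP-> | z_in].
- exact: Rle_trans le_head (Rmin_l _ _).
- exact: Rle_trans le_head (Rmin_r _ _).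
- by apply: IH; rewrite inE z_in orbT.
Qed.

Lemma seq_min_eq_mem (s1 s2 : seq R) : s1 =i s2 -> seq_min s1 = seq_min s2.
Proof.
case: s1 => [|c1 cs1]; case: s2 => [|c2 cs2] //= eq_s.
- by have := mem_head c2 cs2; rewrite -eq_s.
- by have := mem_head c1 cs1; rewrite eq_s.
- congr Some; apply: Rle_antisym; apply: foldl_Rmin_le;
    by [rewrite eq_s foldl_Rmin_mem | rewrite -eq_s foldl_Rmin_mem].
Qed.

Lemma gm_costs_sub p (X Y : finMMSpace) :
  #|mm_pt X| = #|mm_pt Y| -> {subset gm_costs p X Y <= gm_costs p Y X}.
Proof.
move=> card_eq a /gm_costsP[f f_tr ->]; apply/gm_costsP.
have fK := transportK f_tr card_eq; have gK := transport_sectionK f_tr.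
have f_mu := transport_mu f_tr card_eq.
exists (transport_section f_tr); first exact: is_transport_inv fK gK f_mu.
by rewrite (gm_cost_inv fK gK f_mu).
Qed.

Lemma dGM_sym p (X Y : finMMSpace) :
  #|mm_pt X| = #|mm_pt Y| -> dGM p X Y = dGM p Y X.
Proof.
move=> card_eq; rewrite !dGME; apply: seq_min_eq_mem => a.
by apply/idP/idP; apply: gm_costs_sub; rewrite card_eq.
Qed.

Lemma dGM_card_le p (X Y : finMMSpace) :
  dGM p X Y <> None -> (#|mm_pt Y| <= #|mm_pt X|)%N.
Proof.
rewrite dGME; case E : (gm_costs p X Y) => [|a costs] // _.
have /gm_costsP[f f_tr _] : a \in gm_costs p X Y by rewrite E mem_head.
exact: card_transport_le f_tr.
Qed.

Theorem proposition2p3 (X Y : finMMSpace) (p : R) (hp : Rle 1 p) :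
  (#|mm_pt X| = #|mm_pt Y| -> dGM p X Y = dGM p Y X) /\
  (#|mm_pt X| <> #|mm_pt Y| ->
     (dGM p X Y = None \/ dGM p Y X = None) /\
     (dGM p X Y = dGM p Y X <-> (dGM p X Y = None /\ dGM p Y X = None))).
Proof.
split; first exact: dGM_sym.
move=> card_neq.
have one_None : dGM p X Y = None \/ dGM p Y X = None.
  case: (dGM p X Y) (@dGM_card_le p X Y) => [a|] le_YX; last by left.
  case: (dGM p Y X) (@dGM_card_le p Y X) => [b|] le_XY; last by right.
  by case: card_neq; apply/eqP; rewrite eqn_leq le_XY ?le_YX.
split=> //; split=> [eq_dGM | [-> ->] //].
by case: one_None => E; [rewrite -eq_dGM E | rewrite eq_dGM E].
Qed.
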